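(* Let $\mathfrak{R}$ be an alternative ring with a nontrivial idempotent $e_1$ and Peirce decomposition $\mathfrak{R}=\mathfrak{R}_{11}\oplus\mathfrak{R}_{12}\oplus\mathfrak{R}_{21}\oplus\mathfrak{R}_{22}$, satisfying: (i) if $a_{11}\in\mathfrak{R}_{11}$, $a_{22}\in\mathfrak{R}_{22}$ and $[a_{11}+a_{22},\mathfrak{R}_{12}]=0$, then $a_{11}+a_{22}\in\mathcal{Z}(\mathfrak{R})$; (ii) if $a_{11}\in\mathfrak{R}_{11}$, $a_{22}\in\mathfrak{R}_{22}$ and $[a_{11}+a_{22},\mathfrak{R}_{21}]=0$, then $a_{11}+a_{22}\in\mathcal{Z}(\mathfrak{R})$. Let $\mathcal{D}$ be a multiplicative Lie-type derivation of $\mathfrak{R}$. Then for any $a_{11}\in\mathfrak{R}_{11}$ and $b_{ij}\in\mathfrak{R}_{ij}$ with $i\neq j$ there exists $z_{a_{11},b_{ij}}\in\mathcal{Z}(\mathfrak{R})$ such that $\mathcal{D}(a_{11}+b_{ij})=\mathcal{D}(a_{11})+\mathcal{D}(b_{ij})+z_{a_{11},b_{ij}}$.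
   Context: Rings are not assumed associative or unital. The associator is $(x,y,z)=(xy)z-x(yz)$; $\mathfrak{R}$ is alternative if $(x,x,y)=0=(y,x,x)$ for all $x,y$. $[x,y]=xy-yx$ and $\mathcal{Z}(\mathfrak{R})=\{r: [r,x]=0\ \forall x\in\mathfrak{R}\}$. Define $p_1(x)=x$, $p_n(x_1,\dots,x_n)=[p_{n-1}(x_1,\dots,x_{n-1}),x_n]$. For $n\ge2$, a (not necessarily additive) map $\mathcal{D}\colon\mathfrak{R}\to\mathfrak{R}$ is a multiplicative Lie $n$-derivation if $\mathcal{D}(p_n(x_1,\dots,x_n))=\sum_{i=1}^n p_n(x_1,\dots,\mathcal{D}(x_i),\dots,x_n)$ for all $x_i\in\mathfrak{R}$; a multiplicative Lie-type derivation is a multiplicative Lie $n$-derivation for some $n\ge2$. A nontrivial idempotent is $e_1\ne0$ with $e_1^2=e_1$ which is not a multiplicative identity. With $e_2a:=a-e_1a$, $ae_2:=a-ae_1$, set $\mathfrak{R}_{ij}=e_i\mathfrak{R}e_j$ ($i,j=1,2$), so $\mathfrak{R}=\bigoplus_{i,j}\mathfrak{R}_{ij}$. *)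

(* A (not necessarily associative, not necessarily unital)
   ring is an abelian group (zmodType) with a biadditive multiplication. *)
From mathcomp Require Import all_boot all_algebra.
Set Implicit Arguments. Unset Strict Implicit. Unset Printing Implicit Defensive.
Import GRing.Theory.
Local Open Scope ring_scope.

Section NonAssoc.
Variables (R : zmodType) (mul : R -> R -> R).

Definition nonassoc_ring : Prop :=
  (forall x y z, mul (x + y) z = mul x z + mul y z) /\
  (forall x y z, mul x (y + z) = mul x y + mul x z).

Definition associator (x y z : R) : R := mul (mul x y) z - mul x (mul y z).

Definition alternative : Prop :=
  forall x y, associator x x y = 0 /\ associator y x x = 0.

Definition commr (x y : R) : R := mul x y - mul y x.

Definition in_center (r : R) : Prop := forall x, commr r x = 0.

(* lie_poly k xs = p_{k+1}(xs 0, ..., xs k):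
   p_1(x) = x, p_n(x_1..x_n) = [p_{n-1}(x_1..x_{n-1}), x_n] *)
Fixpoint lie_poly (k : nat) (xs : nat -> R) : R :=
  match k with
  | 0 => xs 0%N
  | k'.+1 => commr (lie_poly k' xs) (xs k)
  end.

Definition upd (xs : nat -> R) (i : nat) (v : R) : nat -> R :=
  fun j => if j == i then v else xs j.

(* multiplicative Lie n-derivation (n >= 2), no additivity assumed;
   the arguments x_1..x_n are xs 0, ..., xs (n-1) *)
Definition lie_n_derivation (n : nat) (D : R -> R) : Prop :=
  forall xs : nat -> R,
    D (lie_poly n.-1 xs) =
    \sum_(i < n) lie_poly n.-1 (upd xs i (D (xs i))).

Definition lie_type_derivation (D : R -> R) : Prop :=
  exists2 n, (2 <= n)%N & lie_n_derivation n D.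

Definition nontrivial_idempotent (e1 : R) : Prop :=
  e1 <> 0 /\ mul e1 e1 = e1 /\ ~ (forall x, mul e1 x = x /\ mul x e1 = x).

(* Peirce components: index true = 1, false = 2.
   e_1 a := e1 a, e_2 a := a - e1 a; a e_1 := a e1, a e_2 := a - a e1. *)
Definition lmul_e (e1 : R) (i : bool) (a : R) : R :=
  if i then mul e1 a else a - mul e1 a.
Definition rmul_e (e1 : R) (j : bool) (a : R) : R :=
  if j then mul a e1 else a - mul a e1.

Definition in_peirce (e1 : R) (i j : bool) (x : R) : Prop :=
  exists a, x = rmul_e e1 j (lmul_e e1 i a).

End NonAssoc.

From mathcomp Require Import all_boot all_algebra.
Import GRing.Theory.
Local Open Scope ring_scope.
Set Implicit Arguments. Unset Strict Implicit. Unset Printing Implicit Defensive.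

(* Let s = D(a + b) - D a - D b.  D of a Lie monomial p_n(u, y_2, ..., y_n) is
   p_n(D u, y_2, ..., y_n) plus a term additive in u, so p_n(s, y_2, ..., y_n) is
   the corresponding defect of D at p_n(a, y_2, ...) and p_n(b, y_2, ...).
   With every y_i = e1 this reads (ad e1)^(n-1) s = 0, because ad e1 = [-, e1]
   kills a; as ad e1 is 0 on R11, R22 and +-1 on R12, R21, s lies in R11 + R22.
   With y_2 = x in the off-diagonal space opposite to b and y_i = e1 otherwise,
   [b, x] lies in R11 + R22 and is killed by ad e1, so one more application of
   the all-e1 case gives (ad e1)^(2n-3) [s, x] = 0; but [s, x] lies in the
   off-diagonal space of x, where ad e1 is invertible, so [s, x] = 0.
   Hypothesis (i) or (ii) then puts s in the center. *)

Section AdditiveMaps.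
Variables (U V : zmodType) (f : U -> V).
Hypothesis fD : {morph f : u v / u + v}.

Lemma morphD_0 : f 0 = 0.
Proof. by apply: (@addrI _ (f 0)); rewrite -fD !addr0. Qed.

Lemma morphD_N u : f (- u) = - f u.
Proof. by apply: (@addrI _ (f u)); rewrite -fD !subrr morphD_0. Qed.

Lemma morphD_B u v : f (u - v) = f u - f v.
Proof. by rewrite fD morphD_N. Qed.

Lemma morphD_Mn u n : f (u *+ n) = f u *+ n.
Proof. by elim: n => [|n IH]; rewrite ?mulr0n ?morphD_0 // !mulrS fD IH. Qed.

End AdditiveMaps.

Lemma iter_morphD (V : zmodType) (f : V -> V) k :
  {morph f : u v / u + v} -> {morph iter k f : u v / u + v}.
Proof. by move=> fD u v; elim: k => //= k ->; rewrite fD. Qed.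

Section NonassocRing.
Variables (R : zmodType) (mul : R -> R -> R).
Hypothesis mulR : nonassoc_ring mul.

Local Notation "x ⋅ y" := (mul x y) (at level 40, left associativity).

Lemma mulDx z : {morph mul^~ z : x y / x + y}.
Proof. by move=> x y; rewrite mulR.1. Qed.

Lemma mulxD x : {morph mul x : y z / y + z}.
Proof. exact: mulR.2. Qed.

Lemma mul0x y : 0 ⋅ y = 0.
Proof. exact: morphD_0 (mulDx y). Qed.
Lemma mulx0 x : x ⋅ 0 = 0.
Proof. exact: morphD_0 (mulxD x). Qed.
Lemma mulBx x y z : (x - y) ⋅ z = x ⋅ z - y ⋅ z.
Proof. exact: (morphD_B (mulDx z) x y). Qed.
Lemma mulxB x y z : z ⋅ (x - y) = z ⋅ x - z ⋅ y.
Proof. exact: (morphD_B (mulxD z) x y). Qed.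
Lemma mulMnx x y n : (x *+ n) ⋅ y = (x ⋅ y) *+ n.
Proof. exact: (morphD_Mn (mulDx y) x n). Qed.
Lemma mulxMn x y n : x ⋅ (y *+ n) = (x ⋅ y) *+ n.
Proof. exact: (morphD_Mn (mulxD x) y n). Qed.

Lemma commrDl z : {morph commr mul ^~ z : x y / x + y}.
Proof. by move=> x y; rewrite /commr mulDx mulxD opprD addrACA. Qed.

Definition ad (e z : R) := commr mul z e.

Lemma adD e : {morph ad e : x y / x + y}.
Proof. exact: commrDl. Qed.

Lemma iter_ad0 e k : iter k (ad e) 0 = 0.
Proof. exact: morphD_0 (iter_morphD k (adD e)). Qed.

Lemma lie_poly_ext k (xs ys : nat -> R) :
  xs =1 ys -> lie_poly mul k xs = lie_poly mul k ys.
Proof. by move=> eq_xy; elim: k => [|k IH] /=; rewrite ?IH eq_xy. Qed.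

Lemma lie_poly_upd0D k xs :
  {morph (fun u => lie_poly mul k (upd xs 0 u)) : u v / u + v}.
Proof. by move=> u v; elim: k => [|k IH] /=; rewrite ?IH ?commrDl. Qed.

Lemma lie_poly_const_ad k e u :
  lie_poly mul k (upd (fun=> e) 0 u) = iter k (ad e) u.
Proof. by elim: k => [|k IH] //; rewrite iterS -IH. Qed.

Lemma lie_poly_ad_commr k e y u :
  lie_poly mul k.+1 (upd (fun j => if j == 1%N then y else e) 0 u) =
  iter k (ad e) (commr mul u y).
Proof. by elim: k => [|k IH] //; rewrite iterS -IH. Qed.

Section LieDerivation.
Variables (D : R -> R) (m : nat).
Hypothesis HD : lie_n_derivation mul m.+2 D.

Definition defect v w := D (v + w) - D v - D w.

Lemma lie_derivation0 : D 0 = 0.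
Proof.
have lie0 k xs : xs 0%N = 0 -> lie_poly mul k xs = 0.
  by move=> xs0; elim: k => [|k IH] //=; rewrite IH /commr mul0x mulx0 subrr.
have := HD (fun=> 0); rewrite lie0 // => ->; apply: big1 => i _.
have [-> | i_gt0] := posnP i; last by apply: lie0; rewrite /upd eq_sym eqn0Ngt i_gt0.
by rewrite /= /upd /= /commr mul0x mulx0 subrr.
Qed.

Lemma defect0l w : defect 0 w = 0.
Proof. by rewrite /defect add0r lie_derivation0 subr0 subrr. Qed.

Lemma defect0r v : defect v 0 = 0.
Proof. by rewrite /defect addr0 lie_derivation0 subrr subr0. Qed.

Lemma defect_morph (f T : R -> R) :
  {morph f : u u' / u + u'} -> {morph T : u u' / u + u'} ->
  (forall u, D (f u) = f (D u) + T u) ->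
  forall v w, f (defect v w) = defect (f v) (f w).
Proof.
move=> fD TD Df v w; rewrite /defect -fD !Df TD !(morphD_B fD).
by rewrite opprD addrACA [T v + _]addrC addrK opprD addrACA subrr addr0.
Qed.

Lemma lie_poly_defect ys v w :
  lie_poly mul m.+1 (upd ys 0 (defect v w)) =
  defect (lie_poly mul m.+1 (upd ys 0 v)) (lie_poly mul m.+1 (upd ys 0 w)).
Proof.
pose T u := \sum_(i < m.+1) lie_poly mul m.+1 (upd (upd ys i.+1 (D (ys i.+1))) 0 u).
apply: (defect_morph (T := T) (lie_poly_upd0D m.+1 ys)) => [u u'|u].
  by rewrite -big_split; apply: eq_bigr => i _; apply: lie_poly_upd0D.
rewrite HD big_ord_recl; congr (_ + _).
  by apply: lie_poly_ext => -[|j].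
by apply: eq_bigr => i _; apply: lie_poly_ext => -[|j]; rewrite /upd lift0.
Qed.

Lemma iter_ad_defect e v w :
  iter m.+1 (ad e) (defect v w) =
  defect (iter m.+1 (ad e) v) (iter m.+1 (ad e) w).
Proof. by rewrite -!lie_poly_const_ad lie_poly_defect. Qed.

Lemma iter_ad_commr_defect e y v w :
  iter m (ad e) (commr mul (defect v w) y) =
  defect (iter m (ad e) (commr mul v y)) (iter m (ad e) (commr mul w y)).
Proof. by rewrite -!lie_poly_ad_commr lie_poly_defect. Qed.

Lemma defect_ad_nilpotent e a b :
  ad e a = 0 -> iter m.+1 (ad e) (defect a b) = 0.
Proof. by move=> ea; rewrite iter_ad_defect iterSr ea iter_ad0 defect0l. Qed.

Lemma commr_defect_ad_nilpotent e y a b :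
  ad e (commr mul b y) = 0 ->
  iter (m.+1 + m) (ad e) (commr mul (defect a b) y) = 0.
Proof.
move=> eby; rewrite iterD iter_ad_commr_defect iter_ad_defect.
rewrite -[in X in defect _ X]iterD addSnnS iterD.
by rewrite [iter m.+1 _ (commr mul b y)]iterSr eby !iter_ad0 defect0r.
Qed.

End LieDerivation.

Section Alternative.
Hypothesis altR : alternative mul.

Lemma associatorDl y z x x' :
  associator mul (x + x') y z = associator mul x y z + associator mul x' y z.
Proof. by rewrite /associator !mulDx opprD addrACA. Qed.

Lemma associatorDm x z y y' :
  associator mul x (y + y') z = associator mul x y z + associator mul x y' z.
Proof. by rewrite /associator mulxD !mulDx mulxD opprD addrACA. Qed.

Lemma associatorDr x y z z' :
  associator mul x y (z + z') = associator mul x y z + associator mul x y z'.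
Proof. by rewrite /associator !mulxD opprD addrACA. Qed.

Lemma associator_swap12 x y z : associator mul y x z = - associator mul x y z.
Proof.
have := (altR (x + y) z).1.
rewrite associatorDl !associatorDm (altR x z).1 (altR y z).1 add0r addr0.
by move/addr0_eq.
Qed.

Lemma associator_swap23 x y z : associator mul x z y = - associator mul x y z.
Proof.
have := (altR (y + z) x).2.
rewrite associatorDr !associatorDm (altR y x).2 (altR z x).2 add0r addr0.
by rewrite addrC => /addr0_eq.
Qed.

Lemma associator_swap13 x y z : associator mul z y x = - associator mul x y z.
Proof.
rewrite (associator_swap12 y z x) (associator_swap23 y x z).
by rewrite associator_swap12 !opprK.
Qed.

Section Peirce.
Variable e : R.
Hypothesis e_idem : e ⋅ e = e.

Definition peirce (i j : bool) x := e ⋅ x = x *+ i /\ x ⋅ e = x *+ j.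

Lemma mul_e_idl x : e ⋅ (e ⋅ x) = e ⋅ x.
Proof. by have := (altR e x).1; rewrite /associator e_idem => /subr0_eq. Qed.

Lemma mul_e_idr x : (x ⋅ e) ⋅ e = x ⋅ e.
Proof. by have := (altR e x).2; rewrite /associator e_idem => /subr0_eq. Qed.

Lemma mul_e_flexible x : (e ⋅ x) ⋅ e = e ⋅ (x ⋅ e).
Proof.
by have := associator_swap23 e e x; rewrite (altR e x).1 oppr0 => /subr0_eq.
Qed.

Lemma lmul_e_peirce i a : e ⋅ lmul_e mul e i a = lmul_e mul e i a *+ i.
Proof. by case: i; rewrite /= ?mulxB mul_e_idl ?subrr ?mulr1n ?mulr0n. Qed.

Lemma rmul_e_peirce j a : rmul_e mul e j a ⋅ e = rmul_e mul e j a *+ j.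
Proof. by case: j; rewrite /= ?mulBx mul_e_idr ?subrr ?mulr1n ?mulr0n. Qed.

Lemma rmul_e_lpeirce i j y :
  e ⋅ y = y *+ i -> e ⋅ rmul_e mul e j y = rmul_e mul e j y *+ i.
Proof.
move=> ey; case: j => /=; first by rewrite -mul_e_flexible ey mulMnx.
by rewrite mulxB -mul_e_flexible ey mulMnx mulrnBl.
Qed.

Lemma in_peirceP i j x : in_peirce mul e i j x -> peirce i j x.
Proof.
case=> a ->; split; first exact/rmul_e_lpeirce/lmul_e_peirce.
exact: rmul_e_peirce.
Qed.

Lemma peirceN i j x : peirce i j x -> peirce i j (- x).
Proof.
case=> ex xe; split.
  by rewrite (morphD_N (mulxD e)) ex mulNrn.
by rewrite (morphD_N (mulDx e)) xe mulNrn.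
Qed.

Lemma peirceB i j x y : peirce i j x -> peirce i j y -> peirce i j (x - y).
Proof.
by case=> ex xe [ey ye]; split; rewrite ?mulxB ?mulBx ?ex ?ey ?xe ?ye mulrnBl.
Qed.

Lemma associator_peirce i j k l x y :
  peirce i j x -> peirce k l y -> associator mul x e y = x ⋅ y *+ j - x ⋅ y *+ k.
Proof. by case=> _ xe [ey _]; rewrite /associator xe ey mulMnx mulxMn. Qed.

Lemma peirce_mul i j k x y : peirce i j x -> peirce j k y -> peirce i k (x ⋅ y).
Proof.
move=> Px Py; have mid0 : associator mul x e y = 0.
  by rewrite (associator_peirce Px Py) subrr.
case: Px Py => ex _ [_ ye]; split.
  have := associator_swap12 x e y.
  by rewrite mid0 oppr0 /associator ex mulMnx => /subr0_eq.
have := associator_swap23 x e y.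
by rewrite mid0 oppr0 /associator ye mulxMn => /subr0_eq.
Qed.

Lemma peirce_mul0 i j k x y : j != k -> peirce i j x -> peirce k i y -> x ⋅ y = 0.
Proof.
move=> jk Px Py; have := associator_swap13 x e y.
rewrite (associator_peirce Py Px) subrr (associator_peirce Px Py).
move/eqP; rewrite eq_sym oppr_eq0 subr_eq0.
by case: j k jk {Px Py} => -[] // _; rewrite mulr1n mulr0n => /eqP.
Qed.

Lemma ad_peirce i j x : peirce i j x -> ad e x = x *+ j - x *+ i.
Proof. by case=> ex xe; rewrite /ad /commr ex xe. Qed.

Lemma ad_peirce_diag i x : peirce i i x -> ad e x = 0.
Proof. by move/ad_peirce ->; rewrite subrr. Qed.

Lemma iter_ad_offdiag i j k x :
  i != j -> peirce i j x -> iter k (ad e) x = if i && odd k then - x else x.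
Proof.
move=> ij Px; have adx : ad e x = if i then - x else x.
  by rewrite (ad_peirce Px); case: i j ij {Px} => -[] // _;
    rewrite mulr1n mulr0n ?sub0r ?subr0.
elim: k => [|k IH] /=; first by rewrite andbF.
rewrite IH; case: i adx {ij Px IH} => /= adx; last by rewrite adx.
by case: (odd k); rewrite /= ?(morphD_N (adD e)) adx ?opprK.
Qed.

Lemma iter_ad_offdiag_eq0 i j k x :
  i != j -> peirce i j x -> iter k (ad e) x = 0 -> x = 0.
Proof.
move=> ij Px; rewrite (iter_ad_offdiag k ij Px).
by case: ifP => // _ /eqP; rewrite oppr_eq0 => /eqP.
Qed.

Lemma commr_peirce_diag i j d d' x :
  i != j -> peirce i i d -> peirce j j d' -> peirce i j x ->
  peirce i j (commr mul (d + d') x).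
Proof.
move=> ij Pd Pd' Px; have ji : j != i by rewrite eq_sym.
rewrite /commr mulDx mulxD (peirce_mul0 ji Px Pd) (peirce_mul0 ji Pd' Px).
by rewrite addr0 add0r; apply: peirceB (peirce_mul Pd Px) (peirce_mul Px Pd').
Qed.

Lemma ad_commr_offdiag i j b x :
  peirce i j b -> peirce j i x -> ad e (commr mul b x) = 0.
Proof.
move=> Pb Px; rewrite /commr (morphD_B (adD e)).
by rewrite (ad_peirce_diag (peirce_mul Pb Px)) (ad_peirce_diag (peirce_mul Px Pb)) subrr.
Qed.

Definition peirce_comp i j x := rmul_e mul e j (lmul_e mul e i x).

Lemma in_peirce_comp i j x : in_peirce mul e i j (peirce_comp i j x).
Proof. by exists x. Qed.

Lemma peirce_decomp x :
  x = peirce_comp true true x + peirce_comp true false x +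
      peirce_comp false true x + peirce_comp false false x.
Proof.
have rmul_e_sum a : rmul_e mul e true a + rmul_e mul e false a = a.
  by rewrite /= addrC subrK.
by rewrite -addrA !rmul_e_sum /= addrC subrK.
Qed.

Lemma peirce_offdiag_sum_eq0 u v :
  peirce true false u -> peirce false true v -> u + v = 0 -> u = 0 /\ v = 0.
Proof.
case=> eu _ [ev _] uv0; have u0 : u = 0.
  by have := congr1 (mul e) uv0; rewrite mulxD eu ev mulx0 mulr1n mulr0n addr0.
by split=> //; move: uv0; rewrite u0 add0r.
Qed.

Lemma ad_nilpotent_diag k x :
  iter k.+1 (ad e) x = 0 -> x = peirce_comp true true x + peirce_comp false false x.
Proof.
have diag0 i y : peirce i i y -> iter k.+1 (ad e) y = 0.
  by move=> Py; rewrite iterSr (ad_peirce_diag Py) iter_ad0.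
have P i j := in_peirceP (in_peirce_comp i j x).
move: (P true true) (P true false) (P false true) (P false false) (peirce_decomp x).
move: (peirce_comp true true x) (peirce_comp true false x).
move: (peirce_comp false true x) (peirce_comp false false x).
move=> x21 x22 x11 x12 P11 P12 P21 P22 ->; clear P.
rewrite !(iter_morphD k.+1 (adD e)) (diag0 _ _ P11) (diag0 _ _ P22) add0r addr0.
rewrite (iter_ad_offdiag _ _ P12) // (iter_ad_offdiag _ _ P21) //=.
have P12' : peirce true false (if ~~ odd k then - x12 else x12).
  by case: ifP => _; [apply: peirceN|].
case/(peirce_offdiag_sum_eq0 P12' P21) => x12_0 ->.
have -> : x12 = 0 by move: x12_0; case: ifP => // _ /eqP; rewrite oppr_eq0 => /eqP.
by rewrite !addr0.
Qed.

Section PeirceLieDerivation.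
Variables (D : R -> R) (m : nat).
Hypothesis HD : lie_n_derivation mul m.+2 D.

Lemma defect_peirce_diag a b :
  peirce true true a ->
  defect D a b =
  peirce_comp true true (defect D a b) + peirce_comp false false (defect D a b).
Proof.
by move=> Pa; apply: ad_nilpotent_diag (defect_ad_nilpotent HD b (ad_peirce_diag Pa)).
Qed.

Lemma commr_defect_offdiag i j a b x :
  i != j -> peirce true true a -> peirce i j b -> peirce j i x ->
  commr mul (defect D a b) x = 0.
Proof.
move=> ij Pa Pb Px; have ji : j != i by rewrite eq_sym.
have P i' j' := in_peirceP (in_peirce_comp i' j' (defect D a b)).
have Ps : peirce j i (commr mul (defect D a b) x).
  rewrite (defect_peirce_diag b Pa).
  by case: i j ij ji Px {Pb} => -[] // _ ji Px; [rewrite addrC|];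
    apply: commr_peirce_diag ji (P _ _) (P _ _) Px.
exact: iter_ad_offdiag_eq0 ji Ps
  (commr_defect_ad_nilpotent HD _ (ad_commr_offdiag Pb Px)).
Qed.

End PeirceLieDerivation.
End Peirce.
End Alternative.
End NonassocRing.

Theorem lemma2p2 (R : zmodType) (mul : R -> R -> R) (e1 : R) (D : R -> R)
  (Hring : nonassoc_ring mul)
  (Halt : alternative mul)
  (He1 : nontrivial_idempotent mul e1)
  (Hi : forall a11 a22, in_peirce mul e1 true true a11 ->
          in_peirce mul e1 false false a22 ->
          (forall x, in_peirce mul e1 true false x -> commr mul (a11 + a22) x = 0) ->
          in_center mul (a11 + a22))
  (Hii : forall a11 a22, in_peirce mul e1 true true a11 ->
          in_peirce mul e1 false false a22 ->
          (forall x, in_peirce mul e1 false true x -> commr mul (a11 + a22) x = 0) ->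
          in_center mul (a11 + a22))
  (HD : lie_type_derivation mul D) :
  forall a11 b, in_peirce mul e1 true true a11 ->
    (in_peirce mul e1 true false b \/ in_peirce mul e1 false true b) ->
    exists z, in_center mul z /\ D (a11 + b) = D a11 + D b + z.
Proof.
move=> a b Ha Hb; case: HD => -[|[|m]] // _ HDm.
have e_idem : mul e1 e1 = e1 := He1.2.1.
have peirceP := in_peirceP Hring Halt e_idem.
have Pa := peirceP _ _ _ Ha.
exists (defect D a b); split; last first.
  by rewrite /defect [RHS]addrC [D a + _]addrC addrA !subrK.
have diag := defect_peirce_diag Hring Halt e_idem HDm b Pa.
have offdiag := commr_defect_offdiag Hring Halt e_idem HDm.
rewrite diag; case: Hb => Hb; [apply: Hii | apply: Hi]; try exact: in_peirce_comp.
- by move=> x Hx; rewrite -diag; apply: (offdiag true false) => //; exact: peirceP.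
- by move=> x Hx; rewrite -diag; apply: (offdiag false true) => //; exact: peirceP.
Qed.
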